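(* If $f\in\mathcal P_s$ and $g\in\mathcal P_r$, then $\{f,g\}\in\mathcal P_{r+s-2}$, and $$ \|\{f,g\}\|_+\le 2^4\,\Omega\,r\,s\,\min(r,s)\,\|f\|_+\|g\|_+ , $$ where $\Omega=\sqrt{2K(m_1+m_2)/(m_1m_2)}$.
   Context: Normal modes of a diatomic chain of $N$ cells with masses $m_1>m_2>0$ and harmonic constant $K>0$: let $\mathcal K_N=\{\lfloor-N/2\rfloor+1,\dots,\lfloor N/2\rfloor\}$; for $k\in\mathcal K_N$, $\kappa=2\pi k/N$, $\Delta_k=m_1^2+m_2^2+2m_1m_2\cos\kappa$, $\omega_k^\pm=\big(K\frac{m_1+m_2\pm\sqrt{\Delta_k}}{m_1m_2}\big)^{1/2}$, $\Omega=\omega_0^+$. The complex normal-mode coordinates $\hat q_k^l,\hat p_k^l$ ($k\in\mathcal K_N$, $l=\pm$) are canonical, $\{\hat q_k^l,\hat p_{k'}^{l'}\}=\delta_{k,k'}\delta_{l,l'}$, with $\hat q^l_{-k}=\overline{\hat q^l_k}$, $\hat p^l_{-k}=\overline{\hat p^l_k}$ (indices $k$ taken mod $N$ in $\mathcal K_N$). Polynomial classes. Put $\xi_k^l=(\hat p_k^l+i\omega_k^l\hat q_{-k}^l)/\sqrt2$, $\eta_k^l=(\hat p_{-k}^l-i\omega_k^l\hat q_k^l)/\sqrt2$, so that $\{\xi_k^l,\eta_{k'}^{l'}\}=i\omega_k^l\delta_{k,k'}\delta_{l,l'}$. For $\sigma\in\{\pm1\}^s$, $k\in\mathcal K_N^s$,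 $l\in\{+,-\}^s$ let $\Xi^s_{\sigma,k,l}=\prod_{j=1}^s(\xi^{l_j}_{k_j})^{(1+\sigma_j)/2}(\eta^{l_j}_{k_j})^{(1-\sigma_j)/2}$. Let $\mathcal I_s$ be the set of tuples $(\sigma,\tilde\tau,k,l,n)$ with $\sigma,\tilde\tau\in\{\pm1\}^s$, $k\in\mathcal K_N^s$, $l\in\{+,-\}^s$, $n\in\mathbb Z$ with $\lfloor-(s-1)/2\rfloor\le n\le\lfloor(s-1)/2\rfloor$, and write $\delta^n_j=\delta_{j,nN}$. $\mathcal P_s$ is the space of functions of the form $f=N^{-(s-2)/2}\sum_{(\sigma,\tilde\tau,k,l,n)\in\mathcal I_s}f_{\sigma,\tilde\tau,l,n}\big(\tfrac{k_1}N,\dots,\tfrac{k_s}N\big)\,\Xi^s_{\sigma,k,l}\,\delta^n_{\tilde\tau\cdot k}$ with continuous coefficient functions $f_{\sigma,\tilde\tau,l,n}:[-1,1]^s\to\mathbb C$, normed by $\|f\|_+=\max_{(\sigma,\tilde\tau,k,l,n)\in\mathcal I_s}\big|f_{\sigma,\tilde\tau,l,n}(k_1/N,\dots,k_s/N)\big|\,\delta^n_{\tilde\tau\cdot k}$. *)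

From HB Require Import structures.
From mathcomp Require Import all_boot all_order all_algebra.
Set Implicit Arguments. Unset Strict Implicit. Unset Printing Implicit Defensive.
Import Order.TTheory GRing.Theory Num.Theory.
Local Open Scope ring_scope.

Section DiatomicChain.
Variable C : numClosedFieldType.
Variable N : nat.
Variables m1 m2 K : C.

(* K_N = {floor(-N/2)+1, ..., floor(N/2)} is enumerated by i : 'I_N via
   k = i - floor((N-1)/2). *)
Definition kval (i : 'I_N) : int := (i : nat)%:Z - ((N.-1)./2)%:Z.

(* e^{2 pi i/N}: N.-root (-1) is e^{i pi/N} (minimal nonnegative argument). *)
Definition zN : C := (N.-root (-1)) ^+ 2.
(* cos(2 pi k / N) = Re (e^{2 pi i k/N}) *)
Definition cosk (k : int) : C := 'Re (zN ^ k).
Definition Delta (k : int) : C := m1 ^+ 2 + m2 ^+ 2 + 2 * m1 * m2 * cosk k.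
(* omega_k^l, l = true for "+", false for "-" *)
Definition omega (k : int) (l : bool) : C :=
  sqrtC (K * (m1 + m2 + (if l then 1 else -1) * sqrtC (Delta k)) / (m1 * m2)).
Definition Omega : C := sqrtC (2 * K * (m1 + m2) / (m1 * m2)).

(* variables: (k, l, b) stands for xi_k^l if b = true, eta_k^l if b = false *)
Definition var := ('I_N * bool * bool)%type.

Definition pb (a b : var) : C :=
  let: (ka, la, xa) := a in let: (kb, lb, xb) := b in
  if (ka == kb) && (la == lb) then
    (if xa && ~~ xb then 'i * omega (kval ka) la
     else if ~~ xa && xb then - ('i * omega (kval ka) la) else 0)
  else 0.

Definition mono_val s (m : 'I_s -> var) (x : var -> C) : C := \prod_(j < s) x (m j).

(* Poisson bracket of two monomials (Leibniz rule), evaluated at x *)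
Definition mono_br s r (m : 'I_s -> var) (m' : 'I_r -> var) (x : var -> C) : C :=
  \sum_(i < s) \sum_(j < r)
     pb (m i) (m' j) * (\prod_(i' < s | i' != i) x (m i'))
                     * (\prod_(j' < r | j' != j) x (m' j')).

(* coefficient functions f_{sigma, tau, l, n} : [-1,1]^s -> C;
   sigma_j = +1 <-> true, tau_j = +1 <-> true, l_j = + <-> true *)
Definition coefT s :=
  {ffun 'I_s -> bool} -> {ffun 'I_s -> bool} -> {ffun 'I_s -> bool} -> int ->
  ('I_s -> C) -> C.

Definition sgn (b : bool) : int := if b then 1 else -1.
Definition tdot s (t : {ffun 'I_s -> bool}) (k : {ffun 'I_s -> 'I_N}) : int :=
  \sum_(j < s) sgn (t j) * kval (k j).
(* floor(-(s-1)/2) <= n <= floor((s-1)/2)  <->  -s <= 2n <= s-1 *)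
Definition nrange s (n : int) : bool := (- (s%:Z) <= n *+ 2) && (n *+ 2 <= s%:Z - 1).
Definition nlist s : seq int := [seq (i%:Z - s%:Z) | i <- iota 0 (2 * s).+1].
(* (sigma, tau, k, l, n) in I_s together with delta^n_{tau.k} = 1 *)
Definition adm s t (k : {ffun 'I_s -> 'I_N}) (n : int) : bool :=
  nrange s n && (tdot t k == n * N%:Z).

Definition monoOf s (sg : {ffun 'I_s -> bool}) (k : {ffun 'I_s -> 'I_N})
  (l : {ffun 'I_s -> bool}) : 'I_s -> var := fun j => (k j, l j, sg j).
Definition kpt s (k : {ffun 'I_s -> 'I_N}) : 'I_s -> C :=
  fun j => (kval (k j))%:~R / N%:R.
Definition scaleN s : C := (sqrtC N%:R) ^ (2%:Z - s%:Z).

Definition Pval s (f : coefT s) (x : var -> C) : C :=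
  scaleN s *
  \sum_(sg : {ffun 'I_s -> bool}) \sum_(t : {ffun 'I_s -> bool})
  \sum_(k : {ffun 'I_s -> 'I_N}) \sum_(l : {ffun 'I_s -> bool})
  \sum_(n <- nlist s | adm t k n)
     f sg t l n (kpt k) * mono_val (monoOf sg k l) x.

Definition Pbr s r (f : coefT s) (g : coefT r) (x : var -> C) : C :=
  scaleN s * scaleN r *
  \sum_(sg : {ffun 'I_s -> bool}) \sum_(t : {ffun 'I_s -> bool})
  \sum_(k : {ffun 'I_s -> 'I_N}) \sum_(l : {ffun 'I_s -> bool})
  \sum_(n <- nlist s | adm t k n)
  \sum_(sg' : {ffun 'I_r -> bool}) \sum_(t' : {ffun 'I_r -> bool})
  \sum_(k' : {ffun 'I_r -> 'I_N}) \sum_(l' : {ffun 'I_r -> bool})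
  \sum_(n' <- nlist r | adm t' k' n')
     f sg t l n (kpt k) * g sg' t' l' n' (kpt k')
       * mono_br (monoOf sg k l) (monoOf sg' k' l') x.

Definition pnorm s (f : coefT s) : C :=
  \big[Num.max/0]_(sg : {ffun 'I_s -> bool}) \big[Num.max/0]_(t : {ffun 'I_s -> bool})
  \big[Num.max/0]_(k : {ffun 'I_s -> 'I_N}) \big[Num.max/0]_(l : {ffun 'I_s -> bool})
  \big[Num.max/0]_(n <- nlist s | adm t k n) `|f sg t l n (kpt k)|.

Definition in_box s (x : 'I_s -> C) : Prop :=
  forall j, x j \is Num.real /\ `|x j| <= 1.
Definition cont_box s (F : ('I_s -> C) -> C) : Prop :=
  forall x, in_box x -> forall e : C, 0 < e ->
    exists2 d : C, 0 < d & forall y, in_box y -> (forall j, `|y j - x j| < d) ->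
      `|F y - F x| < e.
Definition is_coef s (f : coefT s) : Prop :=
  forall sg t l n, nrange s n -> cont_box (f sg t l n).

End DiatomicChain.

From HB Require Import structures.
From mathcomp Require Import all_boot all_order all_algebra ring zify.
Set Implicit Arguments. Unset Strict Implicit. Unset Printing Implicit Defensive.
Import Order.TTheory GRing.Theory Num.Theory.
Local Open Scope ring_scope.

(* By the Leibniz rule, {f, g} is a sum over "contraction terms"
   T = (a, b, i, j): a is an index of the expansion of f (data sigma, tau, k,
   l, n), b one of g, and i, j positions in the two monomials; the generator
   bracket {X_(a,i), X_(b,j)} is nonzero only if k_i = k'_j, l_i = l'_j and
   sigma_i <> sigma'_j, and is then bounded by Omega.  Each such term is a
   monomial of degree r + s - 2 whose index data [target T] is obtained by
   concatenating the remaining data of a and b, flipping the signs tau on one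
   side so that the momentum constraint tau.k = n N holds again with a new
   n = +-(tau_i n_a - tau'_j n_b) in the admissible range.

   The coefficient of {f, g} at a grid index G is the sum of the coefficients
   of the terms with target G; off the grid it is extended by Lagrange
   interpolation, which is a polynomial, hence continuous.  The norm bound
   follows because a fiber of [target] contains at most 16 r s min(r, s)
   nonzero terms: a term in the fiber is determined by its positions (i, j),
   four bits, and either n_a (s values) or n_b (r values), whichever has
   fewer values (injectivity of [key_f] and [key_g]). *)

Section Frequencies.
Variables (C : numClosedFieldType) (N : nat) (m1 m2 K : C).
Hypotheses (N_gt0 : (0 < N)%N) (m2_gt0 : 0 < m2) (m2_lt_m1 : m2 < m1) (K_gt0 : 0 < K).

Lemma m1_gt0 : 0 < m1. Proof. exact: lt_trans m2_lt_m1. Qed.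

Lemma norm_zNk (k : int) : `|zN C N ^ k| = 1.
Proof.
have norm_zN : `|zN C N| = 1 by rewrite normrX norm_rootC normrN1 rootC1 ?expr1n.
case: k => n; first by rewrite /= normrX norm_zN expr1n.
by rewrite /exprz normfV normrX norm_zN expr1n invr1.
Qed.

Lemma cosk_bnd k : -1 <= cosk C N k <= 1.
Proof.
rewrite -real_ler_norml ?Creal_Re //.
by rewrite -(norm_zNk k) (leif_normC_Re_Creal (zN C N ^ k)).
Qed.

Lemma mass_sum_ge0 : 0 <= m1 + m2.
Proof. by rewrite addr_ge0 ?ltW ?m1_gt0. Qed.

Lemma mass_prod_ge0 : 0 <= 2 * m1 * m2.
Proof. by rewrite !mulr_ge0 ?ltW ?m1_gt0. Qed.

(* (m1 - m2)^2 <= Delta_k <= (m1 + m2)^2, hence 0 <= sqrt Delta_k <= m1 + m2. *)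
Lemma sqrt_Delta_bnd k : 0 <= sqrtC (Delta N m1 m2 k) <= m1 + m2.
Proof.
have [lo hi] := andP (cosk_bnd k).
have D_ge0 : 0 <= Delta N m1 m2 k.
  have -> : Delta N m1 m2 k = (m1 - m2) ^+ 2 + 2 * m1 * m2 * (1 + cosk C N k).
    by rewrite /Delta; ring.
  apply: addr_ge0; last by rewrite mulr_ge0 ?mass_prod_ge0 // -lerBlDl sub0r.
  by rewrite real_exprn_even_ge0 // rpredB // ger0_real // ltW ?m1_gt0.
have D_le : Delta N m1 m2 k <= (m1 + m2) ^+ 2.
  have e : (m1 + m2) ^+ 2 - Delta N m1 m2 k = 2 * m1 * m2 * (1 - cosk C N k).
    by rewrite /Delta; ring.
  by rewrite -subr_ge0 e mulr_ge0 ?mass_prod_ge0 ?subr_ge0.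
rewrite sqrtC_ge0 D_ge0 -{1}(sqrCK mass_sum_ge0) ler_sqrtC ?qualifE /= ?D_ge0 //.
by rewrite real_exprn_even_ge0 // ger0_real // mass_sum_ge0.
Qed.

Lemma Omega_ge0 : 0 <= Omega m1 m2 K.
Proof.
by rewrite sqrtC_ge0 divr_ge0 ?mulr_ge0 ?mass_sum_ge0 ?ltW ?mulr_gt0 ?m1_gt0.
Qed.

Lemma omega_bnd k l : 0 <= omega N m1 m2 K k l <= Omega m1 m2 K.
Proof.
have [D0 D1] := andP (sqrt_Delta_bnd k).
have mm_gt0 : 0 < m1 * m2 by rewrite mulr_gt0 ?m1_gt0.
rewrite /omega /Omega; set D := sqrtC _ in D0 D1 *; set c : C := if l then 1 else -1.
have c_sign : c = 1 \/ c = -1 by rewrite /c; case: (l); [left | right].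
have a1 : K * (m1 + m2 + c * D) / (m1 * m2) <= 2 * K * (m1 + m2) / (m1 * m2).
  rewrite ler_pM2r ?invr_gt0 // -mulrA mulrCA ler_pM2l // mulr_natl mulr2n lerD2l.
  by case: c_sign => ->; rewrite ?mul1r ?mulN1r // (le_trans _ mass_sum_ge0) // oppr_le0.
have a0 : 0 <= K * (m1 + m2 + c * D) / (m1 * m2).
  rewrite divr_ge0 ?(ltW mm_gt0) // mulr_ge0 ?(ltW K_gt0) //.
  by case: c_sign => ->; rewrite ?mul1r ?mulN1r ?subr_ge0 // addr_ge0 ?mass_sum_ge0.
rewrite sqrtC_ge0 a0 ler_sqrtC // qualifE /=.
exact: le_trans a1.
Qed.

Lemma omega0_acoustic : omega N m1 m2 K 0 false = 0.
Proof.
rewrite /omega /Delta /cosk expr0z.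
have -> : 'Re (1 : C) = 1 by apply/(Creal_ReP _ _); rewrite real1.
have -> : m1 ^+ 2 + m2 ^+ 2 + 2 * m1 * m2 * 1 = (m1 + m2) ^+ 2 by ring.
by rewrite sqrCK ?mass_sum_ge0 // mulN1r subrr mulr0 mul0r sqrtC0.
Qed.

Lemma pb_bnd (a b : var N) : `|pb m1 m2 K a b| <= Omega m1 m2 K.
Proof.
case: a b => [[ka la] xa] [[kb lb] xb] /=.
have [o0 o1] := andP (omega_bnd (kval ka) la).
have norm_i_omega : `|'i * omega N m1 m2 K (kval ka) la| <= Omega m1 m2 K.
  by rewrite normrM normCi mul1r ger0_norm.
case: ifP => _; last by rewrite normr0 Omega_ge0.
case: ifP => _; first exact: norm_i_omega.
case: ifP => _; last by rewrite normr0 Omega_ge0.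
by rewrite normrN.
Qed.
End Frequencies.

Lemma pb_neq0 (C : numClosedFieldType) N (m1 m2 K : C) (a b : var N) :
  pb m1 m2 K a b != 0 -> [/\ a.1.1 = b.1.1, a.1.2 = b.1.2 & a.2 != b.2].
Proof.
case: a b => [[ka la] xa] [[kb lb] xb] /=.
case: ifP => [/andP [/eqP -> /eqP ->] | _]; last by rewrite eqxx.
by case: xa; case: xb; rewrite /= ?eqxx.
Qed.

Section NonnegMax.
Variable R : numDomainType.

Lemma max_ge0 (x y : R) : 0 <= x -> 0 <= y -> 0 <= Num.max x y.
Proof.
by move=> hx hy; rewrite comparable_le_max ?hx // real_comparable ?ger0_real.
Qed.

Lemma bigmax_ge0 (I : Type) (s : seq I) (P : pred I) (F : I -> R) :
  (forall i, P i -> 0 <= F i) -> 0 <= \big[Num.max/0]_(i <- s | P i) F i.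
Proof.
move=> F_ge0; elim: s => [|a s IH]; first by rewrite big_nil.
by rewrite big_cons; case: ifP => // Pa; exact: max_ge0 (F_ge0 _ Pa) IH.
Qed.

Lemma le_bigmax (I : eqType) (s : seq I) (P : pred I) (F : I -> R) x :
  (forall i, P i -> 0 <= F i) -> x \in s -> P x ->
  F x <= \big[Num.max/0]_(i <- s | P i) F i.
Proof.
move=> F_ge0; elim: s => [|a s IH] //; rewrite big_cons inE => /orP[/eqP-> | xs] Px.
  rewrite Px comparable_le_max ?lexx // real_comparable // ger0_real ?F_ge0 //.
  exact: bigmax_ge0.
case: ifP => Pa; last exact: IH.
rewrite comparable_le_max ?IH ?orbT // real_comparable // ger0_real ?F_ge0 //.
exact: bigmax_ge0.
Qed.

Lemma bigmax_le (I : eqType) (s : seq I) (P : pred I) (F : I -> R) B :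
  0 <= B -> (forall i, i \in s -> P i -> 0 <= F i <= B) ->
  \big[Num.max/0]_(i <- s | P i) F i <= B.
Proof.
move=> B_ge0 F_bnd; suff : forall s', {subset s' <= s} ->
    0 <= \big[Num.max/0]_(i <- s' | P i) F i <= B.
  by move=> /(_ s (fun x xs => xs))/andP[].
elim=> [|a s' IH] s's; first by rewrite big_nil lexx.
have /andP[IH0 IHB] : 0 <= \big[Num.max/0]_(i <- s' | P i) F i <= B.
  by apply: IH => i ins; apply: s's; rewrite inE ins orbT.
rewrite big_cons; case: ifP => [Pa | _]; last by rewrite IH0.
have /andP[Fa0 FaB] := F_bnd _ (s's _ (mem_head _ _)) Pa.
by rewrite max_ge0 // comparable_ge_max ?FaB ?IHB // real_comparable ?ger0_real.
Qed.
End NonnegMax.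

Lemma big_del (R : Type) (idx : R) (op : Monoid.com_law idx) n (i : 'I_n)
    (U : 'I_n -> R) :
  \big[op/idx]_(i' < n | i' != i) U i' =
  \big[op/idx]_(0 <= a < n.-1) U (insubd i (bump i a)).
Proof.
rewrite big_mkcond (bigD1_ord i) //= eqxx Monoid.simpm /= big_mkord.
apply: eq_bigr => a _; rewrite eq_sym neq_lift; congr U.
by apply: val_inj; rewrite /= val_insubd /= -[bump _ _]/(val (lift i a)) ltn_ord.
Qed.

Lemma ffun_eq_off (X : Type) n (U1 U2 : {ffun 'I_n -> X}) i :
  U1 i = U2 i -> (forall i', i' != i -> U1 i' = U2 i') -> U1 = U2.
Proof. by move=> ei eoff; apply/ffunP => i'; have [->|/eoff] := eqVneq i' i. Qed.

(* Deleting position i from an s-tuple U and position j from an r-tuple V and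
   concatenating the rest gives an (r + s - 2)-tuple; this is how the index
   data of a contraction term are formed. *)
Section DeletedConcat.
Variables (s r : nat).
Hypotheses (s_gt0 : (0 < s)%N) (r_gt0 : (0 < r)%N).
Local Notation d := (r + s - 2)%N.

Definition concat_del (X : Type) (i : 'I_s) (j : 'I_r) (U : 'I_s -> X)
    (V : 'I_r -> X) (a : nat) : X :=
  if (a < s.-1)%N then U (insubd i (bump i a))
  else V (insubd j (bump j (a - s.-1))).

Definition concat_ffun (X : Type) (i : 'I_s) (j : 'I_r) (U : 'I_s -> X)
    (V : 'I_r -> X) : {ffun 'I_d -> X} :=
  [ffun a : 'I_d => concat_del i j U V a].

Lemma concat_ffunE X i j (U : 'I_s -> X) V (a : 'I_d) :
  concat_ffun i j U V a = concat_del i j U V a.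
Proof. by rewrite ffunE. Qed.

Lemma d_eq : d = (s.-1 + r.-1)%N.
Proof. by move: s_gt0 r_gt0; lia. Qed.

Lemma big_concat_del (R : Type) (idx : R) (op : Monoid.com_law idx)
    (i : 'I_s) (j : 'I_r) (U : 'I_s -> R) (V : 'I_r -> R) :
  \big[op/idx]_(a < d) concat_del i j U V a =
  op (\big[op/idx]_(i' < s | i' != i) U i') (\big[op/idx]_(j' < r | j' != j) V j').
Proof.
rewrite !big_del -(big_mkord xpredT (concat_del i j U V)) d_eq.
rewrite (big_cat_nat _ (leq_addr _ _)) //=; congr (op _ _).
  by apply: eq_big_nat => a /andP[_ ha]; rewrite /concat_del ha.
rewrite -{1}[s.-1]add0n big_addn addKn; apply: eq_big_nat => a _.
by rewrite /concat_del ltnNge leq_addl /= addnK.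
Qed.

Lemma sum_concat_del (R : nmodType) i j (U : 'I_s -> R) V :
  \sum_(a < d) concat_del i j U V a =
  \sum_(i' < s | i' != i) U i' + \sum_(j' < r | j' != j) V j'.
Proof. exact: big_concat_del. Qed.

Lemma prod_concat_del (R : comPzSemiRingType) i j (U : 'I_s -> R) V :
  \prod_(a < d) concat_del i j U V a =
  \prod_(i' < s | i' != i) U i' * \prod_(j' < r | j' != j) V j'.
Proof. exact: big_concat_del. Qed.

Lemma concat_ffun_eql X i j (U1 U2 : 'I_s -> X) (V1 V2 : 'I_r -> X) :
  concat_ffun i j U1 V1 = concat_ffun i j U2 V2 -> forall i', i' != i -> U1 i' = U2 i'.
Proof.
move=> e i' ne; rewrite eq_sym in ne; have [a ha _] := unlift_some ne.
have ad : (a < d)%N by rewrite d_eq (leq_trans (ltn_ord a)) ?leq_addr.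
have := congr1 (fun F : {ffun 'I_d -> X} => F (Ordinal ad)) e.
rewrite !concat_ffunE /concat_del /= ltn_ord.
suff -> : insubd i (bump i a) = i' by [].
by apply: val_inj; rewrite ha /= val_insubd -[bump i a]/(val (lift i a)) ltn_ord.
Qed.

Lemma concat_ffun_eqr X i j (U1 U2 : 'I_s -> X) (V1 V2 : 'I_r -> X) :
  concat_ffun i j U1 V1 = concat_ffun i j U2 V2 -> forall j', j' != j -> V1 j' = V2 j'.
Proof.
move=> e j' ne; rewrite eq_sym in ne; have [a ha _] := unlift_some ne.
have ad : (s.-1 + a < d)%N by rewrite d_eq ltn_add2l ltn_ord.
have := congr1 (fun F : {ffun 'I_d -> X} => F (Ordinal ad)) e.
rewrite !concat_ffunE /concat_del /= ltnNge leq_addr /= addKn.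
suff -> : insubd j (bump j a) = j' by [].
by apply: val_inj; rewrite ha /= val_insubd -[bump j a]/(val (lift j a)) ltn_ord.
Qed.
End DeletedConcat.

(* Bounded Lipschitz functions on the box [-1, 1]^n (for the l^1 distance).
   They contain constants and coordinates and are closed under sums and
   products, so every polynomial is one; and they are continuous on the box. *)
Section LipschitzBox.
Variables (C : numClosedFieldType) (n : nat).

Definition dist1 (x y : 'I_n -> C) : C := \sum_j `|y j - x j|.

Definition lip_bounded (F : ('I_n -> C) -> C) : Prop :=
  exists B L : C, [/\ 0 <= B, 0 <= L,
    (forall x, in_box x -> `|F x| <= B) &
    (forall x y, in_box x -> in_box y -> `|F y - F x| <= L * dist1 x y)].

Lemma lip_bounded_ext F G : F =1 G -> lip_bounded F -> lip_bounded G.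
Proof.
move=> e [B [L [B0 L0 FB FL]]]; exists B, L.
by split=> // [x|x y] *; rewrite -?e; auto.
Qed.

Lemma lip_bounded_const c : lip_bounded (fun _ => c).
Proof. by exists `|c|, 0; split=> // *; rewrite subrr normr0 mul0r. Qed.

Lemma lip_bounded_coord a : lip_bounded (fun x => x a).
Proof.
exists 1, 1; split=> //; first by move=> x /(_ a) [].
move=> x y _ _; rewrite mul1r /dist1 (bigD1 a) //= lerDl.
exact: sumr_ge0.
Qed.

Lemma lip_bounded_add F G :
  lip_bounded F -> lip_bounded G -> lip_bounded (fun x => F x + G x).
Proof.
move=> [B1 [L1 [B10 L10 FB FL]]] [B2 [L2 [B20 L20 GB GL]]].
exists (B1 + B2), (L1 + L2); split; rewrite ?addr_ge0 //.
  by move=> x bx; rewrite (le_trans (ler_normD _ _)) // lerD ?FB ?GB.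
move=> x y bx by_; rewrite opprD addrACA (le_trans (ler_normD _ _)) // mulrDl.
by rewrite lerD ?FL ?GL.
Qed.

Lemma lip_bounded_mul F G :
  lip_bounded F -> lip_bounded G -> lip_bounded (fun x => F x * G x).
Proof.
move=> [B1 [L1 [B10 L10 FB FL]]] [B2 [L2 [B20 L20 GB GL]]].
exists (B1 * B2), (B1 * L2 + B2 * L1); split; rewrite ?addr_ge0 ?mulr_ge0 //.
  by move=> x bx; rewrite normrM ler_pM ?FB ?GB.
move=> x y bx by_.
have -> : F y * G y - F x * G x = F y * (G y - G x) + G x * (F y - F x) by ring.
rewrite (le_trans (ler_normD _ _)) // mulrDl !normrM -!mulrA.
by rewrite lerD // ler_pM ?FL ?GL ?FB ?GB.
Qed.

Lemma lip_bounded_sum (I : Type) (r : seq I) (P : pred I)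
    (G : I -> ('I_n -> C) -> C) :
  (forall i, lip_bounded (G i)) -> lip_bounded (fun x => \sum_(i <- r | P i) G i x).
Proof.
move=> G_lip; elim: r => [|a r IH].
  by apply: (lip_bounded_ext _ (lip_bounded_const 0)) => x; rewrite big_nil.
apply: (@lip_bounded_ext
  (fun x => (if P a then G a x else 0) + \sum_(i <- r | P i) G i x)).
  by move=> x; rewrite big_cons; case: (P a); rewrite ?add0r.
apply: lip_bounded_add => //; case: (P a) => //; exact: lip_bounded_const.
Qed.

Lemma lip_bounded_prod (I : Type) (r : seq I) (P : pred I)
    (G : I -> ('I_n -> C) -> C) :
  (forall i, lip_bounded (G i)) -> lip_bounded (fun x => \prod_(i <- r | P i) G i x).
Proof.
move=> G_lip; elim: r => [|a r IH].
  by apply: (lip_bounded_ext _ (lip_bounded_const 1)) => x; rewrite big_nil.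
apply: (@lip_bounded_ext
  (fun x => (if P a then G a x else 1) * \prod_(i <- r | P i) G i x)).
  by move=> x; rewrite big_cons; case: (P a); rewrite ?mul1r.
apply: lip_bounded_mul => //; case: (P a) => //; exact: lip_bounded_const.
Qed.

Lemma lip_bounded_cont F : lip_bounded F -> cont_box F.
Proof.
move=> [B [L [B0 L0 FB FL]]] x bx e e_gt0.
have Ln_gt0 : 0 < L * n%:R + 1 by rewrite ltr_wpDl ?mulr_ge0.
exists (e / (L * n%:R + 1)); first by rewrite divr_gt0.
move=> y by_ y_near; apply: (le_lt_trans (FL _ _ bx by_)).
have dist_le : dist1 x y <= n%:R * (e / (L * n%:R + 1)).
  rewrite mulr_natl -[n in _ *+ n]card_ord -sumr_const.
  by apply: ler_sum => j _; exact: ltW (y_near j).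
apply: (le_lt_trans (ler_wpM2l L0 dist_le)).
have -> : L * (n%:R * (e / (L * n%:R + 1))) = (L * n%:R / (L * n%:R + 1)) * e.
  by ring.
by rewrite gtr_pMl // ltr_pdivrMr // mul1r ltrDl ltr01.
Qed.
End LipschitzBox.

Section Momenta.
Variable N : nat.
Hypothesis N_gt0 : (0 < N)%N.

Lemma kval_inj : injective (@kval N).
Proof. by move=> b1 b2; rewrite /kval => /addIr [] /val_inj. Qed.

Lemma kval_bnd (b : 'I_N) : - (N%:Z) < kval b *+ 2 <= N%:Z.
Proof.
rewrite /kval; have := ltn_ord b; have := odd_double_half N.-1.
case: N N_gt0 b => // N' _ b /= h hb.
have : (b <= N')%N by [].
by move: h; set H := N'./2; case: (odd N') => /= h hb2; lia.
Qed.

Lemma sgnN b : sgn (~~ b) = - sgn b. Proof. by case: b. Qed.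

Lemma sgn_inj b (x y : int) : sgn b * x = sgn b * y -> x = y.
Proof. by case: b; rewrite ?mul1r ?mulN1r // => /oppr_inj. Qed.

Lemma tdot_split n (t : {ffun 'I_n -> bool}) (k : {ffun 'I_n -> 'I_N}) i :
  tdot t k = sgn (t i) * kval (k i) + \sum_(i' < n | i' != i) sgn (t i') * kval (k i').
Proof. by rewrite /tdot (bigD1 i). Qed.

Lemma tdot_bnd n (t : {ffun 'I_n -> bool}) (k : {ffun 'I_n -> 'I_N}) :
  - (n%:Z * N%:Z) <= tdot t k *+ 2 <= n%:Z * N%:Z.
Proof.
have -> : n%:Z * N%:Z = \sum_(j < n) N%:Z by rewrite sumr_const card_ord -mulr_natl natz.
rewrite /tdot -sumrMnl -sumrN; apply/andP; split; apply: ler_sum => j _;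
by have /andP[h1 h2] := kval_bnd (k j); case: (t j); rewrite /= ?mul1r ?mulN1r; lia.
Qed.
End Momenta.

(* The summation range of [Pval] flattened into a single finite type: an
   index is a tuple (sigma, tau, k, l, q) with n = q - s. *)
Section Indices.
Variables (C : numClosedFieldType) (N : nat).

Definition mindex n : finType :=
  (((({ffun 'I_n -> bool} * {ffun 'I_n -> bool}) * {ffun 'I_n -> 'I_N})
   * {ffun 'I_n -> bool}) * 'I_(2 * n).+1)%type.

Definition mi_sg n (a : mindex n) := a.1.1.1.1.
Definition mi_tau n (a : mindex n) := a.1.1.1.2.
Definition mi_k n (a : mindex n) := a.1.1.2.
Definition mi_l n (a : mindex n) := a.1.2.
Definition mi_q n (a : mindex n) := a.2.
Definition nval n (q : 'I_(2 * n).+1) : int := (q : nat)%:Z - n%:Z.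

Definition madm n (a : mindex n) := adm (mi_tau a) (mi_k a) (nval (mi_q a)).
Definition mmono n (a : mindex n) := monoOf (mi_sg a) (mi_k a) (mi_l a).
Definition mcoef n (f : coefT C n) (a : mindex n) :=
  f (mi_sg a) (mi_tau a) (mi_l a) (nval (mi_q a)) (kpt C (mi_k a)).

Lemma mindex_eq n (a b : mindex n) :
  mi_sg a = mi_sg b -> mi_tau a = mi_tau b -> mi_k a = mi_k b ->
  mi_l a = mi_l b -> mi_q a = mi_q b -> a = b.
Proof.
by case: a b => [[[[? ?] ?] ?] ?] [[[[? ?] ?] ?] ?]; rewrite /mi_sg /mi_tau /mi_k /mi_l /mi_q /= => -> -> -> -> ->.
Qed.

Lemma nval_inj n : injective (@nval n).
Proof. by move=> q1 q2 /addIr [] /val_inj. Qed.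

Lemma nval_in n (q : 'I_(2 * n).+1) : nval q \in nlist n.
Proof. by apply: (map_f (fun i : nat => i%:Z - n%:Z)); rewrite mem_iota /= ltn_ord. Qed.

Lemma nlist_nval n x : x \in nlist n -> exists q : 'I_(2 * n).+1, nval q = x.
Proof. by case/mapP => i; rewrite mem_iota add0n => /andP [_ hi] ->; exists (Ordinal hi). Qed.

Lemma madm_range n (a : mindex n) : madm a -> - (n%:Z) <= nval (mi_q a) *+ 2 <= n%:Z - 1.
Proof. by case/andP. Qed.

Lemma sum_pair (I J : finType) (H : I * J -> C) : \sum_p H p = \sum_i \sum_j H (i, j).
Proof. by rewrite pair_bigA; apply: eq_bigr => -[]. Qed.

Lemma sum_nlist n (P : pred int) (G : int -> C) :
  \sum_(x <- nlist n | P x) G x = \sum_(q < (2 * n).+1 | P (nval q)) G (nval q).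
Proof.
rewrite /nlist big_map /=.
rewrite -(big_mkord (fun q : nat => P (q%:Z - n%:Z)) (fun q : nat => G (q%:Z - n%:Z))).
by rewrite /index_iota subn0.
Qed.

Lemma sum_mindex n (G : {ffun 'I_n -> bool} -> {ffun 'I_n -> bool} ->
    {ffun 'I_n -> 'I_N} -> {ffun 'I_n -> bool} -> int -> C) :
  \sum_sg \sum_t \sum_k \sum_l \sum_(x <- nlist n | adm t k x) G sg t k l x =
  \sum_(a : mindex n | madm a)
    G (mi_sg a) (mi_tau a) (mi_k a) (mi_l a) (nval (mi_q a)).
Proof.
rewrite [RHS]big_mkcond /= !sum_pair.
do 4 (apply: eq_bigr => ? _).
by rewrite sum_nlist big_mkcond.
Qed.

Lemma pnorm_ge0 n (f : coefT C n) : 0 <= pnorm N f.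
Proof. by do 5 (apply: bigmax_ge0 => * ). Qed.

Lemma mcoef_le_pnorm n (f : coefT C n) (a : mindex n) :
  madm a -> `|mcoef f a| <= pnorm N f.
Proof.
move=> a_adm.
apply: le_trans (le_bigmax _ (mem_index_enum (mi_sg a)) _) => //;
  last by move=> *; do 4 (apply: bigmax_ge0 => * ).
apply: le_trans (le_bigmax _ (mem_index_enum (mi_tau a)) _) => //;
  last by move=> *; do 3 (apply: bigmax_ge0 => * ).
apply: le_trans (le_bigmax _ (mem_index_enum (mi_k a)) _) => //;
  last by move=> *; do 2 (apply: bigmax_ge0 => * ).
apply: le_trans (le_bigmax _ (mem_index_enum (mi_l a)) _) => //;
  last by move=> *; apply: bigmax_ge0 => *.
exact: le_bigmax (nval_in (mi_q a)) a_adm.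
Qed.

Lemma pnorm_le n (f : coefT C n) B : 0 <= B ->
  (forall a : mindex n, madm a -> `|mcoef f a| <= B) -> pnorm N f <= B.
Proof.
move=> B0 f_bnd.
apply: bigmax_le => // sg _ _; rewrite bigmax_ge0 //=;
  last by move=> *; do 3 (apply: bigmax_ge0 => * ).
apply: bigmax_le => // t _ _; rewrite bigmax_ge0 //=;
  last by move=> *; do 2 (apply: bigmax_ge0 => * ).
apply: bigmax_le => // k _ _; rewrite bigmax_ge0 //=;
  last by move=> *; apply: bigmax_ge0 => *.
apply: bigmax_le => // l _ _; rewrite bigmax_ge0 //=.
apply: bigmax_le => // x /nlist_nval [q <-] q_adm; rewrite normr_ge0 /=.
exact: (f_bnd ((((sg, t), k), l), q)).
Qed.
End Indices.

Lemma mi_k_at N n (a1 a2 : mindex N n) i :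
  madm a1 -> madm a2 -> mi_tau a1 = mi_tau a2 -> nval (mi_q a1) = nval (mi_q a2) ->
  (forall i', i' != i -> mi_k a1 i' = mi_k a2 i') -> mi_k a1 i = mi_k a2 i.
Proof.
move=> /andP [_ /eqP mom1] /andP [_ /eqP mom2] e_tau e_n e_k.
rewrite (tdot_split _ _ i) in mom1; rewrite (tdot_split _ _ i) in mom2.
have e_rest : \sum_(i' < n | i' != i) sgn (mi_tau a1 i') * kval (mi_k a1 i') =
              \sum_(i' < n | i' != i) sgn (mi_tau a2 i') * kval (mi_k a2 i').
  by apply: eq_bigr => i' ne; rewrite e_tau e_k.
apply/kval_inj/(@sgn_inj (mi_tau a1 i)).
apply: (addIr (\sum_(i' < n | i' != i) sgn (mi_tau a1 i') * kval (mi_k a1 i'))).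
by rewrite mom1 e_rest e_tau mom2 e_n.
Qed.

Lemma mi_k_single N n (a : mindex N n) i : n = 1%N -> madm a -> kval (mi_k a i) = 0.
Proof.
move=> n1 /andP [n_range /eqP mom]; rewrite (tdot_split _ _ i) big_pred0 ?addr0 in mom.
  have n0 : nval (mi_q a) = 0.
    by move: n_range; rewrite /nrange (_ : n%:Z = 1) ?n1 //; lia.
  move: mom; rewrite n0 mul0r.
  by case: (mi_tau a i); rewrite ?mul1r ?mulN1r // => /eqP; rewrite oppr_eq0 => /eqP.
by move=> i'; apply/negbTE; rewrite negbK; apply/eqP/ord_inj; move: (ltn_ord i') (ltn_ord i); lia.
Qed.

(* The admissible values of n for an n'-tuple are n' consecutive integers,
   so n + floor(n'/2) is a position in 'I_n'; this encodes n injectively. *)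
Definition n_pos N n (i0 : 'I_n) (a : mindex N n) : 'I_n :=
  insubd i0 (absz (nval (mi_q a) + (n./2)%:Z)).

Lemma n_pos_inj N n (i1 i2 : 'I_n) (a1 a2 : mindex N n) : madm a1 -> madm a2 ->
  n_pos i1 a1 = n_pos i2 a2 -> nval (mi_q a1) = nval (mi_q a2).
Proof.
move=> /madm_range /andP [lo1 hi1] /madm_range /andP [lo2 hi2] /(congr1 val).
have half2 : (n./2)%:Z *+ 2 = n%:Z - (odd n)%:Z.
  by rewrite -[n in RHS](odd_double_half n) PoszD -muln2 PoszM; lia.
have /andP [o0 o1] : (0 <= (odd n)%:Z <= 1)%R by case: (odd n).
have pos1 : 0 <= nval (mi_q a1) + (n./2)%:Z by lia.
have pos2 : 0 <= nval (mi_q a2) + (n./2)%:Z by lia.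
have lt1 : (absz (nval (mi_q a1) + (n./2)%:Z)%R < n)%N by rewrite -ltz_nat gez0_abs //; lia.
have lt2 : (absz (nval (mi_q a2) + (n./2)%:Z)%R < n)%N by rewrite -ltz_nat gez0_abs //; lia.
rewrite /n_pos !val_insubd lt1 lt2 => /(congr1 (fun m : nat => m%:Z)).
by rewrite !gez0_abs //; lia.
Qed.

(* Lagrange interpolation on the grid (k_1/N, ..., k_n/N), k in K_N^n: every
   function H of the grid point is the restriction of a polynomial, hence of a
   continuous function on the box. *)
Section GridInterpolation.
Variables (C : numClosedFieldType) (N n : nat).
Hypothesis N_gt0 : (0 < N)%N.

Definition gridpt (b : 'I_N) : C := (kval b)%:~R / N%:R.

Definition lagrange (k : {ffun 'I_n -> 'I_N}) (p : 'I_n -> C) : C :=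
  \prod_(a < n) \prod_(b : 'I_N | b != k a) ((p a - gridpt b) / (gridpt (k a) - gridpt b)).

Definition interp (H : {ffun 'I_n -> 'I_N} -> C) (p : 'I_n -> C) : C :=
  \sum_k lagrange k p * H k.

Lemma gridpt_inj : injective gridpt.
Proof.
move=> b1 b2 /(mulIf _) e; apply/kval_inj/eqP.
by rewrite -(eqr_int C) e // invr_eq0 pnatr_eq0 -lt0n.
Qed.

Lemma lagrange_kpt k k' : lagrange k (kpt C k') = (k == k')%:R.
Proof.
rewrite /lagrange; have [<- | nk] := eqVneq.
  rewrite big1 // => a _; rewrite big1 // => b hb.
  by rewrite /kpt divff // subr_eq0; apply: contra hb => /eqP/gridpt_inj->.
have [a ha] : exists a, k a != k' a.
  apply/existsP; move: nk; apply: contraR => /existsPn h.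
  by apply/eqP/ffunP => a; apply/eqP/negPn.
by rewrite (bigD1 a) //= (bigD1 (k' a)) 1?eq_sym //= /kpt subrr !mul0r.
Qed.

Lemma interp_kpt H k : interp H (kpt C k) = H k.
Proof.
rewrite /interp (bigD1 k) //= lagrange_kpt eqxx mul1r big1 ?addr0 // => k' hk'.
by rewrite lagrange_kpt (negPf hk') mul0r.
Qed.

Lemma interp_cont H : cont_box (interp H).
Proof.
apply/lip_bounded_cont/lip_bounded_sum => k.
apply: lip_bounded_mul; last exact: lip_bounded_const.
apply: lip_bounded_prod => a; apply: lip_bounded_prod => b.
apply: lip_bounded_mul; last exact: lip_bounded_const.
by apply: lip_bounded_add; [exact: lip_bounded_coord | exact: lip_bounded_const].
Qed.
End GridInterpolation.

Lemma wrap_flag_eq (c : int) (b : bool) (n1 n2 R D : int) : R <= D ->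
  - R <= n1 *+ 2 <= R - 1 -> - R <= n2 *+ 2 <= R - 1 ->
  (if (c + sgn b * n1) *+ 2 == D then - (c + sgn b * n1) else c + sgn b * n1) =
  (if (c + sgn b * n2) *+ 2 == D then - (c + sgn b * n2) else c + sgn b * n2) ->
  ((c + sgn b * n1) *+ 2 == D) = ((c + sgn b * n2) *+ 2 == D).
Proof.
move=> RD /andP [lo1 hi1] /andP [lo2 hi2].
by case: b; rewrite /= ?mul1r ?mulN1r; case: eqP => h1; case: eqP => h2 //=; lia.
Qed.

Section ContractionTerms.
Variables (C : numClosedFieldType) (N : nat) (m1 m2 K : C) (r s : nat).
Variables (f : coefT C s) (g : coefT C r).
Hypotheses (N_gt0 : (0 < N)%N) (m2_gt0 : 0 < m2) (m2_lt_m1 : m2 < m1) (K_gt0 : 0 < K).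
Hypotheses (s_gt0 : (0 < s)%N) (r_gt0 : (0 < r)%N) (rs_ge3 : (3 <= r + s)%N).
Local Notation d := (r + s - 2)%N.

(* T = (a, b, i, j): the bracket of variable i of monomial a of f with
   variable j of monomial b of g. *)
Definition term : finType := ((mindex N s * mindex N r) * ('I_s * 'I_r))%type.
Definition tf (T : term) := T.1.1.
Definition tg (T : term) := T.1.2.
Definition ti (T : term) := T.2.1.
Definition tj (T : term) := T.2.2.

(* The new momentum index tau_i n_a - tau'_j n_b; when it equals d/2 it
   falls outside the admissible range and is replaced by its opposite, the
   signs tau being flipped accordingly ([wraps]). *)
Definition raw_n (T : term) : int :=
  sgn (mi_tau (tf T) (ti T)) * nval (mi_q (tf T))
  - sgn (mi_tau (tg T) (tj T)) * nval (mi_q (tg T)).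
Definition wraps (T : term) : bool := raw_n T *+ 2 == d%:Z.
Definition term_n (T : term) : int := if wraps T then - raw_n T else raw_n T.

(* New signs: relative to the contracted one, those of f are reversed and
   those of g kept (or the other way round when wrapping), so that the
   momentum constraint holds for the target. *)
Definition tau_f (T : term) (i' : 'I_s) : bool :=
  (mi_tau (tf T) (ti T) == mi_tau (tf T) i') != wraps T.
Definition tau_g (T : term) (j' : 'I_r) : bool :=
  (mi_tau (tg T) (tj T) == mi_tau (tg T) j') == wraps T.

Definition target (T : term) : mindex N d :=
  ((((concat_ffun (ti T) (tj T) (mi_sg (tf T)) (mi_sg (tg T)),
      concat_ffun (ti T) (tj T) (tau_f T) (tau_g T)),
      concat_ffun (ti T) (tj T) (mi_k (tf T)) (mi_k (tg T))),
      concat_ffun (ti T) (tj T) (mi_l (tf T)) (mi_l (tg T))),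
   inord (absz (term_n T + d%:Z))).

Definition term_coef (T : term) : C :=
  if madm (tf T) && madm (tg T) then
    mcoef f (tf T) * mcoef g (tg T) * pb m1 m2 K (mmono (tf T) (ti T)) (mmono (tg T) (tj T))
  else 0.

Definition term_mono (T : term) (x : var N -> C) : C :=
  (\prod_(i' < s | i' != ti T) x (mmono (tf T) i'))
  * (\prod_(j' < r | j' != tj T) x (mmono (tg T) j')).

Lemma term_coef_neq0 T : term_coef T != 0 ->
  [/\ madm (tf T), madm (tg T), mi_k (tf T) (ti T) = mi_k (tg T) (tj T),
      mi_l (tf T) (ti T) = mi_l (tg T) (tj T)
    & mi_sg (tf T) (ti T) != mi_sg (tg T) (tj T)].
Proof.
rewrite /term_coef; case: ifP => [/andP [fa gb] | _]; last by rewrite eqxx.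
by rewrite mulf_eq0 negb_or => /andP [_ /pb_neq0 []].
Qed.

Lemma mono_target T x : mono_val (mmono (target T)) x = term_mono T x.
Proof.
rewrite /mono_val (eq_bigr (fun a : 'I_d => concat_del (ti T) (tj T)
   (fun i' => x (mmono (tf T) i')) (fun j' => x (mmono (tg T) j')) a)).
  exact: prod_concat_del.
move=> a _; rewrite /mmono /monoOf /target /mi_sg /mi_k /mi_l /= !concat_ffunE.
by rewrite /concat_del; case: ifP.
Qed.

Lemma sgn_tau_f T i' :
  sgn (tau_f T i') = sgn (~~ wraps T) * sgn (mi_tau (tf T) (ti T)) * sgn (mi_tau (tf T) i').
Proof. by rewrite /tau_f; case: (mi_tau _ _); case: (mi_tau _ _); case: (wraps T). Qed.

Lemma sgn_tau_g T j' :
  sgn (tau_g T j') = sgn (wraps T) * sgn (mi_tau (tg T) (tj T)) * sgn (mi_tau (tg T) j').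
Proof. by rewrite /tau_g; case: (mi_tau _ _); case: (mi_tau _ _); case: (wraps T). Qed.

Lemma tdot_target T : madm (tf T) -> madm (tg T) -> mi_k (tf T) (ti T) = mi_k (tg T) (tj T) ->
  tdot (mi_tau (target T)) (mi_k (target T)) = term_n T * N%:Z.
Proof.
move=> /andP [_ /eqP mom_f] /andP [_ /eqP mom_g] e_k.
rewrite (tdot_split _ _ (ti T)) in mom_f; rewrite (tdot_split _ _ (tj T)) in mom_g.
rewrite /tdot (eq_bigr (fun a : 'I_d => concat_del (ti T) (tj T)
   (fun i' => sgn (tau_f T i') * kval (mi_k (tf T) i'))
   (fun j' => sgn (tau_g T j') * kval (mi_k (tg T) j')) a)); last first.
  by move=> a _; rewrite /target /mi_tau /mi_k /= !concat_ffunE /concat_del; case: ifP.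
rewrite sum_concat_del //.
under eq_bigr do rewrite sgn_tau_f -!mulrA.
under [X in _ + X]eq_bigr do rewrite sgn_tau_g -!mulrA.
rewrite -!mulr_sumr; move: mom_f mom_g; rewrite e_k /term_n /raw_n.
set Sf := \sum_(i' < s | _) _; set Sg := \sum_(j' < r | _) _ => mom_f mom_g.
have -> : Sf = nval (mi_q (tf T)) * N%:Z
               - sgn (mi_tau (tf T) (ti T)) * kval (mi_k (tg T) (tj T)) by rewrite -mom_f; ring.
have -> : Sg = nval (mi_q (tg T)) * N%:Z
               - sgn (mi_tau (tg T) (tj T)) * kval (mi_k (tg T) (tj T)) by rewrite -mom_g; ring.
by case: (wraps T); case: (mi_tau (tf T) (ti T)); case: (mi_tau (tg T) (tj T)); rewrite /=; ring.
Qed.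

Lemma term_n_range T : madm (tf T) -> madm (tg T) -> mi_k (tf T) (ti T) = mi_k (tg T) (tj T) ->
  - (d%:Z) <= term_n T *+ 2 <= d%:Z - 1.
Proof.
move=> fa gb e_k; have := tdot_bnd N_gt0 (mi_tau (target T)) (mi_k (target T)).
rewrite tdot_target //; have N_pos : (0 < N%:Z)%R by rewrite ltz_nat.
move=> /andP [lo hi].
have d_ge1 : (1 <= d)%N by move: rs_ge3; lia.
have not_half : term_n T *+ 2 != d%:Z.
  rewrite /term_n /wraps; have [half | //] := eqVneq (raw_n T *+ 2) d%:Z.
  by apply/eqP; lia.
apply/andP; split; first by nia.
by move: not_half => /eqP; nia.
Qed.

Lemma nval_target T : madm (tf T) -> madm (tg T) -> mi_k (tf T) (ti T) = mi_k (tg T) (tj T) ->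
  nval (mi_q (target T)) = term_n T.
Proof.
move=> fa gb e_k; have /andP [lo hi] := term_n_range fa gb e_k.
have pos : 0 <= term_n T + d%:Z by lia.
rewrite /nval /mi_q /target /= inordK; first by rewrite gez0_abs //; ring.
by rewrite -ltz_nat gez0_abs //; lia.
Qed.

Lemma madm_target T : term_coef T != 0 -> madm (target T).
Proof.
case/term_coef_neq0 => fa gb e_k _ _.
by rewrite /madm /adm nval_target // tdot_target // eqxx andbT /nrange term_n_range.
Qed.

Definition hcoef (G : mindex N d) : C :=
  \sum_(T : term) (if target T == G then term_coef T else 0).

Definition hbr : coefT C d := fun sg t l n =>
  interp (fun k => hcoef ((((sg, t), k), l), inord (absz (n + d%:Z)))).

Lemma hbr_mcoef G : mcoef hbr G = hcoef G.
Proof.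
case: G => [[[[sg t] k] l] q]; rewrite /mcoef /hbr interp_kpt //.
by congr (hcoef (_, _)); apply: val_inj; rewrite /nval subrK /= inordK.
Qed.

Lemma hbr_coef : is_coef hbr.
Proof. by move=> sg t l n _; apply: interp_cont. Qed.

Lemma Pval_hbr x :
  Pval hbr x = scaleN C N d * \sum_(G : mindex N d | madm G) hcoef G * mono_val (mmono G) x.
Proof.
rewrite /Pval sum_mindex; congr (_ * _); apply: eq_bigr => G _.
by rewrite -hbr_mcoef; case: G => [[[[? ?] ?] ?] ?].
Qed.

Lemma scaleN_add : scaleN C N s * scaleN C N r = scaleN C N d.
Proof.
rewrite /scaleN -expfzDr ?sqrtC_eq0 ?pnatr_eq0 -?lt0n //; congr (_ ^ _).
by rewrite -subzn ?PoszD; [ring | move: rs_ge3; lia].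
Qed.

Lemma Pbr_terms x :
  Pbr m1 m2 K f g (x : var N -> C) = scaleN C N d * \sum_(T : term) term_coef T * term_mono T x.
Proof.
rewrite /Pbr -scaleN_add sum_mindex; congr (_ * _).
under eq_bigr do rewrite sum_mindex.
rewrite [RHS](sum_pair (I := (mindex N s * mindex N r)%type)) [RHS](sum_pair (I := mindex N s)).
rewrite big_mkcond; apply: eq_bigr => a _; have [fa | fa] := boolP (madm a); last first.
  by rewrite big1 // => b _; rewrite big1 // => ij _; rewrite /term_coef /tf /= (negPf fa) mul0r.
rewrite big_mkcond; apply: eq_bigr => b _; have [gb | gb] := boolP (madm b); last first.
  by rewrite big1 // => ij _; rewrite /term_coef /tf /tg /= (negPf gb) andbF mul0r.
rewrite (sum_pair (I := 'I_s)) /mono_br mulr_sumr; apply: eq_bigr => i _.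
rewrite mulr_sumr; apply: eq_bigr => j _.
by rewrite /term_coef /term_mono /tf /tg /ti /tj /= fa gb /mcoef /mmono !mulrA.
Qed.

Lemma sum_by_target x :
  \sum_(G : mindex N d | madm G) hcoef G * mono_val (mmono G) x =
  \sum_(T : term) term_coef T * term_mono T x.
Proof.
rewrite /hcoef; under eq_bigr do rewrite mulr_suml.
rewrite exchange_big /=; apply: eq_bigr => T _.
have [-> | nz] := eqVneq (term_coef T) 0.
  by rewrite mul0r big1 // => G _; case: ifP; rewrite mul0r.
rewrite (bigD1 (target T)) ?madm_target //= eqxx mono_target big1 ?addr0 // => G /andP [_ hG].
by rewrite eq_sym (negPf hG) mul0r.
Qed.

Lemma Pval_hbr_eq x : Pval hbr x = Pbr m1 m2 K f g (x : var N -> C).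
Proof. by rewrite Pval_hbr sum_by_target Pbr_terms. Qed.

Definition fiber (G : mindex N d) : {set term} :=
  [set T | (target T == G) && (term_coef T != 0)].

Lemma fiberP G T : T \in fiber G -> target T = G /\ term_coef T != 0.
Proof. by rewrite inE => /andP [/eqP]. Qed.

Lemma term_n_fiber G T1 T2 : T1 \in fiber G -> T2 \in fiber G -> term_n T1 = term_n T2.
Proof.
rewrite !inE => /andP [/eqP tg1 /term_coef_neq0 [fa1 gb1 k1 _ _]].
move=> /andP [/eqP tg2 /term_coef_neq0 [fa2 gb2 k2 _ _]].
by rewrite -nval_target // -[RHS]nval_target // tg1 tg2.
Qed.

(* If s = 1 or r = 1 the contracted momentum is 0, where only the optical
   branch has a nonzero frequency: the contracted branch is then l = +. *)
Lemma contracted_optical T : term_coef T != 0 -> ((s == 1) || (r == 1))%N ->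
  mi_l (tf T) (ti T) = true.
Proof.
move=> nz single; have [fa gb e_k e_l _] := term_coef_neq0 nz.
have k0 : kval (mi_k (tf T) (ti T)) = 0.
  by case/orP: single => /eqP one; [exact: mi_k_single one fa | rewrite e_k; exact: mi_k_single one gb].
case l_opt : (mi_l (tf T) (ti T)) => //; move: nz.
rewrite /term_coef fa gb /= /pb /mmono /monoOf /= e_k e_l !eqxx /= -e_k k0 -e_l l_opt.
by rewrite omega0_acoustic // mulr0 oppr0 !if_same mulr0 eqxx.
Qed.

(* One bit recording the wrapping (if min(r, s) = 1) or the contracted
   branch (otherwise); the other one is then determined. *)
Definition key_bit (T : term) : bool :=
  if ((s == 1) || (r == 1))%N then wraps T else mi_l (tf T) (ti T).

Lemma raw_n_fix_f T : raw_n T =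
  sgn (mi_tau (tf T) (ti T)) * nval (mi_q (tf T))
  + sgn (~~ mi_tau (tg T) (tj T)) * nval (mi_q (tg T)).
Proof. by rewrite /raw_n sgnN mulNr. Qed.

Lemma raw_n_fix_g T : raw_n T =
  - (sgn (mi_tau (tg T) (tj T)) * nval (mi_q (tg T)))
  + sgn (mi_tau (tf T) (ti T)) * nval (mi_q (tf T)).
Proof. by rewrite /raw_n addrC. Qed.

Lemma fiber_indices G T1 T2 : T1 \in fiber G -> T2 \in fiber G ->
  mi_tau (tf T1) (ti T1) = mi_tau (tf T2) (ti T2) ->
  mi_tau (tg T1) (tj T1) = mi_tau (tg T2) (tj T2) -> key_bit T1 = key_bit T2 ->
  nval (mi_q (tf T1)) = nval (mi_q (tf T2)) \/ nval (mi_q (tg T1)) = nval (mi_q (tg T2)) ->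
  [/\ wraps T1 = wraps T2, nval (mi_q (tf T1)) = nval (mi_q (tf T2)),
      nval (mi_q (tg T1)) = nval (mi_q (tg T2))
    & mi_l (tf T1) (ti T1) = mi_l (tf T2) (ti T2)].
Proof.
move=> T1G T2G e_ti e_tj e_bit e_n; have e_term_n := term_n_fiber T1G T2G.
have [[_ nz1] [_ nz2]] := (fiberP T1G, fiberP T2G).
have [[fa1 gb1 _ _ _] [fa2 gb2 _ _ _]] := (term_coef_neq0 nz1, term_coef_neq0 nz2).
have e_wraps : wraps T1 = wraps T2.
  move: e_bit; rewrite /key_bit; case: ifP => [_ // | /norP [s_ne1 r_ne1] _].
  move: e_term_n; rewrite /term_n /wraps.
  case: e_n => [e_na | e_nb].
    rewrite !raw_n_fix_f e_ti e_tj e_na; apply: (wrap_flag_eq (R := r%:Z)).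
    - by clear -s_ne1 s_gt0; lia.
    - exact: madm_range gb1.
    - exact: madm_range gb2.
  rewrite !raw_n_fix_g e_ti e_tj e_nb; apply: (wrap_flag_eq (R := s%:Z)).
  - by clear -r_ne1 r_gt0; lia.
  - exact: madm_range fa1.
  - exact: madm_range fa2.
have e_raw : raw_n T1 = raw_n T2.
  by move: e_term_n; rewrite /term_n e_wraps; case: (wraps T2) => // /oppr_inj.
have [e_na e_nb] : nval (mi_q (tf T1)) = nval (mi_q (tf T2))
                   /\ nval (mi_q (tg T1)) = nval (mi_q (tg T2)).
  case: e_n => e; split=> //.
    by move: e_raw; rewrite !raw_n_fix_f e_ti e_tj e => /addrI/sgn_inj.
  by move: e_raw; rewrite !raw_n_fix_g e_ti e_tj e => /addrI/sgn_inj.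
split=> //; move: e_bit; rewrite /key_bit; case: ifP => [single _ | _ //].
by rewrite (contracted_optical nz1) ?(contracted_optical nz2).
Qed.

Lemma tf_determined T1 T2 : term_coef T1 != 0 -> term_coef T2 != 0 ->
  target T1 = target T2 -> ti T1 = ti T2 -> tj T1 = tj T2 ->
  mi_sg (tf T1) (ti T1) = mi_sg (tf T2) (ti T2) ->
  mi_tau (tf T1) (ti T1) = mi_tau (tf T2) (ti T2) ->
  mi_l (tf T1) (ti T1) = mi_l (tf T2) (ti T2) ->
  wraps T1 = wraps T2 -> nval (mi_q (tf T1)) = nval (mi_q (tf T2)) -> tf T1 = tf T2.
Proof.
move=> nz1 nz2 e_target e_i e_j; rewrite -e_i => e_sg e_tau e_l e_wraps e_n.
have [[fa1 _ _ _ _] [fa2 _ _ _ _]] := (term_coef_neq0 nz1, term_coef_neq0 nz2).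
move: e_target; rewrite /target -e_i -e_j => -[c_sg c_tau c_k c_l _].
have e_tau_f : mi_tau (tf T1) = mi_tau (tf T2).
  apply: (ffun_eq_off e_tau) => i' /(concat_ffun_eql s_gt0 r_gt0 c_tau).
  rewrite /tau_f e_tau e_wraps -e_i.
  by case: (mi_tau (tf T1) i'); case: (mi_tau (tf T2) i'); case: (mi_tau _ (ti T1)); case: (wraps T2).
have k_off := concat_ffun_eql s_gt0 r_gt0 c_k.
apply: mindex_eq => //; last exact: nval_inj.
- exact: ffun_eq_off e_sg (concat_ffun_eql s_gt0 r_gt0 c_sg).
- exact: ffun_eq_off (mi_k_at fa1 fa2 e_tau_f e_n k_off) k_off.
- exact: ffun_eq_off e_l (concat_ffun_eql s_gt0 r_gt0 c_l).
Qed.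

Lemma tg_determined T1 T2 : term_coef T1 != 0 -> term_coef T2 != 0 ->
  target T1 = target T2 -> ti T1 = ti T2 -> tj T1 = tj T2 -> tf T1 = tf T2 ->
  mi_tau (tg T1) (tj T1) = mi_tau (tg T2) (tj T2) ->
  wraps T1 = wraps T2 -> nval (mi_q (tg T1)) = nval (mi_q (tg T2)) -> tg T1 = tg T2.
Proof.
move=> nz1 nz2 e_target e_i e_j e_f; rewrite -e_j => e_tau e_wraps e_n.
have [_ _ k1 l1 sg1] := term_coef_neq0 nz1.
have [_ _ k2 l2 sg2] := term_coef_neq0 nz2.
move: k2 l2 sg2; rewrite -e_i -e_j -e_f => k2 l2 sg2.
move: e_target; rewrite /target -e_i -e_j e_f => -[c_sg c_tau c_k c_l _].
apply: mindex_eq => //; last exact: nval_inj.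
- apply: ffun_eq_off (concat_ffun_eqr s_gt0 r_gt0 c_sg) => //.
  by move: sg1 sg2; do 3 case: (mi_sg _ _).
- apply: (ffun_eq_off e_tau) => j' /(concat_ffun_eqr s_gt0 r_gt0 c_tau).
  rewrite /tau_g e_tau e_wraps -e_j.
  by case: (mi_tau (tg T1) j'); case: (mi_tau (tg T2) j'); case: (mi_tau _ (tj T1)); case: (wraps T2).
- by apply: ffun_eq_off (concat_ffun_eqr s_gt0 r_gt0 c_k); rewrite -k1 k2.
- by apply: ffun_eq_off (concat_ffun_eqr s_gt0 r_gt0 c_l); rewrite -l1 l2.
Qed.

Lemma term_eq T1 T2 : tf T1 = tf T2 -> tg T1 = tg T2 -> ti T1 = ti T2 -> tj T1 = tj T2 ->
  T1 = T2.
Proof.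
by case: T1 T2 => [[? ?] [? ?]] [[? ?] [? ?]]; rewrite /tf /tg /ti /tj /= => -> -> -> ->.
Qed.

Lemma fiber_determined G T1 T2 : T1 \in fiber G -> T2 \in fiber G ->
  ti T1 = ti T2 -> tj T1 = tj T2 -> mi_sg (tf T1) (ti T1) = mi_sg (tf T2) (ti T2) ->
  key_bit T1 = key_bit T2 ->
  mi_tau (tf T1) (ti T1) = mi_tau (tf T2) (ti T2) ->
  mi_tau (tg T1) (tj T1) = mi_tau (tg T2) (tj T2) ->
  nval (mi_q (tf T1)) = nval (mi_q (tf T2)) \/ nval (mi_q (tg T1)) = nval (mi_q (tg T2)) ->
  T1 = T2.
Proof.
move=> T1G T2G e_i e_j e_sg e_bit e_tau_i e_tau_j e_n.
have [[tg1 nz1] [tg2 nz2]] := (fiberP T1G, fiberP T2G).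
have e_target : target T1 = target T2 by rewrite tg1 tg2.
have [e_wraps e_na e_nb e_l] := fiber_indices T1G T2G e_tau_i e_tau_j e_bit e_n.
have e_f := tf_determined nz1 nz2 e_target e_i e_j e_sg e_tau_i e_l e_wraps e_na.
exact: term_eq e_f (tg_determined nz1 nz2 e_target e_i e_j e_f e_tau_j e_wraps e_nb) e_i e_j.
Qed.

Definition key_f (T : term) :=
  (ti T, tj T, mi_sg (tf T) (ti T), key_bit T, mi_tau (tf T) (ti T),
   mi_tau (tg T) (tj T), n_pos (ti T) (tf T)).
Definition key_g (T : term) :=
  (ti T, tj T, mi_sg (tf T) (ti T), key_bit T, mi_tau (tf T) (ti T),
   mi_tau (tg T) (tj T), n_pos (tj T) (tg T)).

Lemma key_f_inj G : {in fiber G &, injective key_f}.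
Proof.
move=> T1 T2 T1G T2G [e_i e_j e_sg e_bit e_tau_i e_tau_j e_pos].
have [[_ /term_coef_neq0 [fa1 _ _ _ _]] [_ /term_coef_neq0 [fa2 _ _ _ _]]] :=
  (fiberP T1G, fiberP T2G).
exact: fiber_determined T1G T2G _ _ _ _ _ _ (or_introl (n_pos_inj fa1 fa2 e_pos)).
Qed.

Lemma key_g_inj G : {in fiber G &, injective key_g}.
Proof.
move=> T1 T2 T1G T2G [e_i e_j e_sg e_bit e_tau_i e_tau_j e_pos].
have [[_ /term_coef_neq0 [_ gb1 _ _ _]] [_ /term_coef_neq0 [_ gb2 _ _ _]]] :=
  (fiberP T1G, fiberP T2G).
exact: fiber_determined T1G T2G _ _ _ _ _ _ (or_intror (n_pos_inj gb1 gb2 e_pos)).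
Qed.

Lemma card_fiber G : (#|fiber G| <= 16 * r * s * minn r s)%N.
Proof.
have card_f := @leq_card_in _ _ key_f _ (key_f_inj (G := G)).
have card_g := @leq_card_in _ _ key_g _ (key_g_inj (G := G)).
rewrite !card_prod !card_ord card_bool in card_f card_g.
by case: (leqP r s) => rs; [apply: leq_trans card_g _ | apply: leq_trans card_f _]; lia.
Qed.

Local Notation M := (Omega m1 m2 K * pnorm N f * pnorm N g).

Lemma M_ge0 : 0 <= M.
Proof. by rewrite !mulr_ge0 ?pnorm_ge0 ?Omega_ge0. Qed.

Lemma term_coef_bnd T : `|term_coef T| <= M.
Proof.
rewrite /term_coef; case: ifP => [/andP [fa gb] | _]; last by rewrite normr0 M_ge0.
have -> : M = pnorm N f * pnorm N g * Omega m1 m2 K by rewrite [RHS]mulrC mulrA.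
by rewrite !normrM !ler_pM ?mulr_ge0 ?normr_ge0 ?pnorm_ge0 ?mcoef_le_pnorm ?pb_bnd.
Qed.

Lemma hcoef_bnd G : `|hcoef G| <= (#|fiber G|)%:R * M.
Proof.
rewrite mulr_natl -sumr_const big_mkcond /=; apply: le_trans (ler_norm_sum _ _ _) _.
apply: ler_sum => T _; rewrite inE; case: eqP => _ /=; last by rewrite normr0.
by have [-> | nz] := eqVneq (term_coef T) 0; rewrite ?normr0 ?term_coef_bnd.
Qed.

Lemma pnorm_hbr_bnd :
  pnorm N hbr <= 2 ^+ 4 * Omega m1 m2 K * r%:R * s%:R * (minn r s)%:R
                 * pnorm N f * pnorm N g.
Proof.
have -> : 2 ^+ 4 * Omega m1 m2 K * r%:R * s%:R * (minn r s)%:R * pnorm N f * pnorm N g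
          = (16 * r * s * minn r s)%N%:R * M by rewrite !natrM; ring.
apply: pnorm_le => [|G _]; first by rewrite mulr_ge0 ?M_ge0.
rewrite hbr_mcoef (le_trans (hcoef_bnd G)) // ler_wpM2r ?M_ge0 //.
by rewrite ler_nat card_fiber.
Qed.
End ContractionTerms.

Unset Implicit Arguments.

Theorem lemma1 (C : numClosedFieldType) (N : nat) (m1 m2 K : C) (r s : nat)
    (f : coefT C s) (g : coefT C r) :
  (0 < N)%N -> 0 < m2 -> m2 < m1 -> 0 < K ->
  (1 <= s)%N -> (1 <= r)%N -> (3 <= r + s)%N ->
  is_coef f -> is_coef g ->
  exists h : coefT C (r + s - 2),
    is_coef h /\
    (forall x : var N -> C, Pval h x = Pbr m1 m2 K f g x) /\
    pnorm N h <= 2 ^+ 4 * Omega m1 m2 K * r%:R * s%:R * (minn r s)%:R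
                 * pnorm N f * pnorm N g.
Proof.
move=> N_gt0 m2_gt0 m2_lt_m1 K_gt0 s_gt0 r_gt0 rs_ge3 _ _.
exists (hbr N m1 m2 K f g); split; first exact: hbr_coef.
split; first by move=> x; apply: Pval_hbr_eq.
exact: pnorm_hbr_bnd.
Qed.
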